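(* Let $\mathcal{A}_1=(Q,R_1,V_1,V_1',f_1)$ and $\mathcal{A}_2=(Q,R_2,V_2,V_2',f_2)$ be two stochastic CA with the same set of states, with explicit global functions $F_1,F_2$. If they are not deterministic and $S_{F_1}=S_{F_2}$, then $|R_1|$ and $|R_2|$ have a common prime factor, i.e. $\mathscr{PF}(\mathcal{A}_1)\cap\mathscr{PF}(\mathcal{A}_2)\neq\emptyset$.
   Context: A stochastic CA is $(Q,R,V,V',f)$ with $Q$ finite states, $R$ finite random symbols, $V=\{v_1,\dots,v_r\}$, $V'=\{v'_1,\dots,v'_{r'}\}$ finite subsets of $\mathbb{Z}$, $f:Q^r\times R^{r'}\to Q$; explicit global function $F(c,s)_z=f((c_{z+v_1},\dots,c_{z+v_r}),(s_{z+v'_1},\dots,s_{z+v'_{r'}}))$. It is deterministic if $f$ does not depend on its second argument. $\nu_R$ is the uniform Bernoulli measure on $R^{\mathbb{Z}}$; the stochastic global function $S_F:Q^{\mathbb{Z}}\to\mathcal{M}(Q^{\mathbb{Z}})$ is $S_F(c)([u]_z)=\nu_R(\{s: F(c,s)\in[u]_z\})$ for cylinders $[u]_z=\{c:c_{z+x}=u_x,0\le x<|u|\}$. $\mathscr{PF}(\mathcal{A})$ denotes the set of prime factors of $|R|$. *)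

From mathcomp Require Import all_boot all_order all_algebra.
Set Implicit Arguments. Unset Strict Implicit. Unset Printing Implicit Defensive.
Import GRing.Theory Num.Theory.
Local Open Scope ring_scope.

(* A stochastic CA (Q, R, V, V', f): V = [:: v_1; ...; v_r] and
   V' = [:: v'_1; ...; v'_r'] are duplicate-free lists of integers (enumerations
   of the finite neighbourhoods), f : Q^r x R^r' -> Q. *)
Section SCA.
Variables (Q R : finType) (V V' : seq int).
Variable f : (size V).-tuple Q -> (size V').-tuple R -> Q.

Definition deterministic : Prop := forall a s1 s2, f a s1 = f a s2.

Definition globalF (c : int -> Q) (s : int -> R) (z : int) : Q :=
  f [tuple c (z + tnth (in_tuple V) i) | i < size V]
    [tuple s (z + tnth (in_tuple V') i) | i < size V'].

Definition in_cyl (u : seq Q) (z : int) (d : int -> Q) : bool :=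
  all (fun p => d (z + (p.1)%:Z) == p.2) (zip (iota 0 (size u)) u).

(* the finite window of random-symbol cells on which the event
   {s | F(c,s) \in [u]_z} depends *)
Definition window (u : seq Q) (z : int) : seq int :=
  undup [seq z + (x%:Z) + v | x <- iota 0 (size u), v <- V'].

(* extension of an assignment w of the window W to a full configuration
   (cells outside W get an arbitrary fixed symbol r0; irrelevant) *)
Definition ext (r0 : R) (W : seq int) (w : seq R) : int -> R :=
  fun k => nth r0 w (index k W).

(* S_F(c)([u]_z) = nu_R({s | F(c,s) \in [u]_z}), nu_R the uniform Bernoulli
   measure on R^Z; since the event only depends on the coordinates in the
   finite window W, its measure is (#good assignments of W) / |R|^|W|. *)
Definition SF (c : int -> Q) (z : int) (u : seq Q) : rat :=
  let W := window u z in
  match [pick r : R] with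
  | Some r0 =>
      (#|[set w : (size W).-tuple R | in_cyl u z (globalF c (ext r0 W w))]|%:R)
        / ((#|R| ^ size W)%N%:R)
  | None => 0
  end.

End SCA.

Definition PF (R : finType) : seq nat := primes #|R|.

From mathcomp Require Import all_boot all_order all_algebra.
Set Implicit Arguments. Unset Strict Implicit. Unset Printing Implicit Defensive.
Import GRing.Theory Num.Theory.

(* Every value of S_F is a fraction k / |R|^n.  A non-deterministic rule has a
   local pattern a and a state q that the random symbols hit with probability
   strictly between 0 and 1; on a configuration that copies a around the
   origin, the cylinder [q]_0 gets such a proper fraction k / |R1|^n with
   0 < k < |R1|^n.  If S_F1 = S_F2 this value is also some l / |R2|^m, and
   k |R2|^m = l |R1|^n forces |R1|^n to divide k unless |R1| and |R2| share a
   prime factor. *)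

Section Arithmetic.
Local Open Scope ring_scope.

Lemma proper_fraction_coprime_neq (F : numFieldType) (m n a b k l : nat) :
  coprime m n -> (0 < k < m ^ a)%N -> (0 < n)%N ->
  k%:R / (m ^ a)%:R != l%:R / (n ^ b)%:R :> F.
Proof.
move=> mn_coprime /andP[k_gt0 k_lt] n_gt0.
have ma_gt0 : (0 < m ^ a)%N by apply: leq_ltn_trans k_lt.
apply/negP; rewrite eqr_div ?pnatr_eq0 -?lt0n ?ma_gt0 ?expn_gt0 ?n_gt0 //.
rewrite -!natrM eqr_nat => /eqP Ek.
have : (m ^ a %| k * n ^ b)%N by rewrite Ek dvdn_mull.
rewrite Gauss_dvdl ?coprimeXl ?coprimeXr // => /(dvdn_leq k_gt0).
by rewrite leqNgt k_lt.
Qed.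

End Arithmetic.

Lemma common_prime_of_not_coprime (m n : nat) :
  (0 < m)%N -> (0 < n)%N -> ~~ coprime m n ->
  exists p : nat, p \in primes m /\ p \in primes n.
Proof.
move=> m_gt0 n_gt0; rewrite coprime_has_primes // negbK.
by case/hasP=> p pn pm; exists p.
Qed.

Lemma ext_tuple (T : finType) (d : T) (W : seq int) (t : (size W).-tuple T) :
  uniq W -> [tuple ext d W t (0 + tnth (in_tuple W) i)%R | i < size W] = t.
Proof.
move=> W_uniq; apply: eq_from_tnth => i.
by rewrite tnth_mktuple add0r /ext (tnth_nth 0%R) /= index_uniq // (tnth_nth d).
Qed.

Section StochasticCA.
Local Open Scope ring_scope.
Variables (Q R : finType) (V V' : seq int).
Variable f : (size V).-tuple Q -> (size V').-tuple R -> Q.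

Lemma SF_fraction c z u : exists k n : nat, SF f c z u = k%:R / (#|R| ^ n)%:R.
Proof.
rewrite /SF; case: pickP => [r0 _|_]; first by do 2 eexists.
by exists 0%N, 0%N; rewrite mul0r.
Qed.

Lemma nondeterministic_witness :
  ~ deterministic f -> exists a s1 s2, f a s1 != f a s2.
Proof.
move=> nondet.
have [/existsP[a /existsP[s1 /existsP[s2 ne]]]|none] :=
  boolP [exists a, exists s1, exists s2, f a s1 != f a s2].
  by exists a, s1, s2.
case: nondet => a s1 s2; apply/eqP; apply: contraNT none => ne.
by apply/existsP; exists a; apply/existsP; exists s1; apply/existsP; exists s2.
Qed.

Lemma nondeterministic_card_gt0 : ~ deterministic f -> (0 < #|R|)%N.
Proof.
move=> /nondeterministic_witness[a [s1 [s2 ne]]]; rewrite lt0n.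
apply: contraNneq ne => /card0_eq R_empty; apply/eqP; congr (f a _).
apply: eq_from_tnth => i.
by have := R_empty (tnth s1 i).
Qed.

Hypotheses (V_uniq : uniq V) (V'_uniq : uniq V').

Lemma window_origin (q : Q) : window V' [:: q] 0 = V'.
Proof.
rewrite /window /= cats0 -[RHS]undup_id //; congr undup.
by rewrite -[RHS]map_id; apply: eq_map => v; rewrite !add0r.
Qed.

Lemma SF_origin (a : (size V).-tuple Q) (q : Q) : (0 < #|R|)%N ->
  SF f (ext q V a) 0 [:: q] =
  #|[set w : (size V').-tuple R | f a w == q]|%:R / (#|R| ^ size V')%:R.
Proof.
move=> R_gt0; rewrite /SF; case: pickP => [r0 _|R_empty]; last first.
  by case/card_gt0P: R_gt0 => r _; have := R_empty r.
set W := window _ _ _; have -> : W = V' by apply: window_origin.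
congr (_%:R / _); apply: eq_card => w; rewrite !inE /in_cyl /= andbT /globalF.
by rewrite addr0 ext_tuple // ext_tuple.
Qed.

Lemma SF_proper_fraction : ~ deterministic f ->
  exists c z u (k n : nat), (0 < k < #|R| ^ n)%N /\
    SF f c z u = k%:R / (#|R| ^ n)%:R.
Proof.
move=> nondet; have R_gt0 := nondeterministic_card_gt0 nondet.
have [a [s1 [s2 ne]]] := nondeterministic_witness nondet.
pose hits := [set w : (size V').-tuple R | f a w == f a s1].
exists (ext (f a s1) V a), 0, [:: f a s1], #|hits|, (size V').
split; last exact: SF_origin.
apply/andP; split; first by apply/card_gt0P; exists s1; rewrite inE.
rewrite -card_tuple -cardsT; apply: proper_card; rewrite properT.
apply/eqP => hitsT; have := in_setT s2.
by rewrite -hitsT inE eq_sym (negbTE ne).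
Qed.

End StochasticCA.

Theorem lemma2 (Q R1 R2 : finType) (V1 V1' V2 V2' : seq int)
  (f1 : (size V1).-tuple Q -> (size V1').-tuple R1 -> Q)
  (f2 : (size V2).-tuple Q -> (size V2').-tuple R2 -> Q) :
  uniq V1 -> uniq V1' -> uniq V2 -> uniq V2' ->
  ~ deterministic f1 -> ~ deterministic f2 ->
  SF f1 = SF f2 ->
  exists p : nat, p \in PF R1 /\ p \in PF R2.
Proof.
move=> V1_uniq V1'_uniq _ _ nondet1 nondet2 SF12.
have R1_gt0 := nondeterministic_card_gt0 nondet1.
have R2_gt0 := nondeterministic_card_gt0 nondet2.
have [c [z [u [k [n [k_proper SF1]]]]]] :=
  SF_proper_fraction V1_uniq V1'_uniq nondet1.
have [l [m SF2]] := SF_fraction f2 c z u.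
apply: common_prime_of_not_coprime => //; apply/negP => coprime12.
have := proper_fraction_coprime_neq rat m l coprime12 k_proper R2_gt0.
by rewrite -SF1 SF12 SF2 eqxx.
Qed.
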